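(* Let $K_{m,n}$ be the complete bipartite graph with parts of sizes $m$ and $n$, and let $k$ be a positive integer with $m,n\geq k$ and $m\geq n$. Then $\gamma_{gr}^{k}(K_{m,n})=m+k-1$, $\gamma_{gr}^{L,k}(K_{m,n})=m+k$, $\gamma_{gr}^{t,k}(K_{m,n})=2k$, and $\gamma_{gr}^{Z,k}(K_{m,n})=2k$ if $m>k$ (and $n\geq k$), while $\gamma_{gr}^{Z,k}(K_{m,n})=2k-1$ if $m=n=k$.
   Context: For a vertex $v$, $N(v)$ is its open neighborhood and $N[v]=N(v)\cup\{v\}$. A sequence $S=(v_1,\ldots,v_m)$ of distinct vertices is a $k$-sequence (resp. $k$-$L$-sequence, $k$-$Z$-sequence, $k$-$t$-sequence) if for each $i$ there is a vertex $u_i$ with $u_i\in N[v_i]$ (resp. $N[v_i]$, $N(v_i)$, $N(v_i)$) such that the number of indices $j<i$ with $u_i\in N[v_j]$ (resp. $N(v_j)$, $N[v_j]$, $N(v_j)$) is less than $k$. The numbers $\gamma_{gr}^{k}(G)$, $\gamma_{gr}^{L,k}(G)$, $\gamma_{gr}^{Z,k}(G)$, $\gamma_{gr}^{t,k}(G)$ are the maximum lengths of such sequences, respectively. *)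

From mathcomp Require Import all_boot.
Set Implicit Arguments. Unset Strict Implicit. Unset Printing Implicit Defensive.

Section Grundy.
Variable T : finType.

(* A simple graph is given by an adjacency relation [e] (assumed symmetric,
   irreflexive where relevant). *)
Definition onbhd (e : rel T) (v : T) : {set T} := [set u | e v u].
Definition cnbhd (e : rel T) (v : T) : {set T} := v |: onbhd e v.

Definition gen_seq (A B : T -> {set T}) (k : nat) (s : seq T) : bool :=
  uniq s &&
  [forall i : 'I_(size s),
     [exists u in A (tnth (in_tuple s) i),
        count (fun v => u \in B v) (take i s) < k]].

(* Maximum length of such a sequence (sequences are duplicate-free,
   hence have length at most #|T|). *)
Definition gen_gamma (A B : T -> {set T}) (k : nat) : nat :=
  \max_(n < #|T|.+1 | [exists t : n.-tuple T, gen_seq A B k t]) n.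

Definition gamma_gr   (e : rel T) k := gen_gamma (cnbhd e) (cnbhd e) k.
Definition gamma_grL  (e : rel T) k := gen_gamma (cnbhd e) (onbhd e) k.
Definition gamma_grZ  (e : rel T) k := gen_gamma (onbhd e) (cnbhd e) k.
Definition gamma_grt  (e : rel T) k := gen_gamma (onbhd e) (onbhd e) k.
End Grundy.

Definition Kbip (m n : nat) : rel ('I_m + 'I_n)%type :=
  fun x y => match x, y with
             | inl _, inr _ | inr _, inl _ => true
             | _, _ => false
             end.
Arguments Kbip : clear implicits.

From mathcomp Require Import all_boot zify.
Set Implicit Arguments. Unset Strict Implicit. Unset Printing Implicit Defensive.

(* In K_{m,n} a vertex u lies in N(w) exactly when w is in the part opposite
   to u, so the counting condition for a witness u only sees how many earlier
   vertices lie in the part opposite to u (plus, for closed neighbourhoods,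
   whether u itself occurred).  For the upper bounds of gamma_gr and
   gamma_gr^L look at the last vertex v and its witness u: fewer than k
   vertices preceding v lie on the side opposite to u (u itself included, for
   closed neighbourhoods), while u's own side has at most m vertices, one fewer
   if u itself is missing from the sequence.  For the
   total (and hence the Z-) version every vertex needs a witness on the other
   side, which caps each side at k vertices.  A Z-sequence is also a Grundy
   sequence, which gives 2k - 1 when m = n = k.  The lower bounds list a block
   of left vertices followed by a block of right vertices. *)

Section GrundySequences.
Variables (T : finType) (A B : T -> {set T}) (k : nat).
Implicit Types (p q s t : seq T) (v : T).

Definition admissible p v := [exists u in A v, count (fun w => u \in B w) p < k].

Lemma gen_seq_nil : gen_seq A B k [::].
Proof. by apply/andP; split=> //; apply/forallP => -[]. Qed.

Lemma gen_seq_rcons p v :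
  gen_seq A B k (rcons p v) = [&& gen_seq A B k p, v \notin p & admissible p v].
Proof.
have tnthE s (i : 'I_(size s)) : tnth (in_tuple s) i = nth v s i by apply: tnth_nth.
have take_rcons i : i <= size p -> take i (rcons p v) = take i p.
  by move=> le_ip; rewrite -cats1 takel_cat.
rewrite /gen_seq rcons_uniq; have [_|vNp /=] := boolP (v \in p); first by rewrite !andbF.
case: (uniq p) => //=; apply/forallP/andP => [adm | [/forallP adm_p adm_v] i].
- split; last first.
    have lt_p : size p < size (rcons p v) by rewrite size_rcons.
    have := adm (Ordinal lt_p).
    by rewrite tnthE /= nth_rcons ltnn eqxx take_rcons // take_size; apply.
  apply/forallP => i; have lt_i : i < size (rcons p v) by rewrite size_rcons leqW.
  have := adm (Ordinal lt_i); rewrite !tnthE /= nth_rcons ltn_ord.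
  by rewrite take_rcons // ltnW.
- have : i < (size p).+1 by rewrite -(size_rcons p v).
  rewrite ltnS leq_eqVlt => /orP [/eqP i_p | lt_ip].
    by rewrite tnthE nth_rcons i_p ltnn eqxx take_rcons // take_size.
  have := adm_p (Ordinal lt_ip); rewrite !tnthE /= nth_rcons lt_ip.
  by rewrite take_rcons // ltnW.
Qed.

Lemma gen_seq_catr p t :
  gen_seq A B k p -> uniq (p ++ t) ->
  (forall q v, prefix (rcons q v) t -> admissible (p ++ q) v) ->
  gen_seq A B k (p ++ t).
Proof.
elim/last_ind: t => [|t v IH]; first by rewrite cats0.
rewrite -rcons_cat rcons_uniq => seq_p /andP [vNpt uniq_pt] adm.
rewrite gen_seq_rcons vNpt adm ?prefix_refl ?andbT //.
apply: IH => // q w pre; apply: adm.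
exact: prefix_trans pre (prefix_rcons t v).
Qed.

Lemma gen_gamma_ge s : gen_seq A B k s -> size s <= gen_gamma A B k.
Proof.
move=> seq_s; have /andP [uniq_s _] := seq_s.
have lt_s : size s < #|T|.+1 by rewrite ltnS -(card_uniqP uniq_s) max_card.
apply: (@leq_bigmax_cond _ _ (fun i : 'I_#|T|.+1 => val i) (Ordinal lt_s)).
by apply/existsP; exists (in_tuple s).
Qed.

Lemma gen_gamma_le X : (forall s, gen_seq A B k s -> size s <= X) -> gen_gamma A B k <= X.
Proof.
move=> le_X; apply/bigmax_leqP => i /existsP [t seq_t].
by have := le_X _ seq_t; rewrite size_tuple.
Qed.

Lemma gen_gamma_eq s0 X :
  gen_seq A B k s0 -> size s0 = X -> (forall s, gen_seq A B k s -> size s <= X) ->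
  gen_gamma A B k = X.
Proof.
move=> seq_s0 size_s0 le_X; apply/eqP; rewrite eqn_leq gen_gamma_le //= -size_s0.
exact: gen_gamma_ge.
Qed.

End GrundySequences.

Lemma gen_seq_sub (T : finType) (A B A' B' : T -> {set T}) k s :
  (forall v, A v \subset A' v) -> (forall v, B' v \subset B v) ->
  gen_seq A B k s -> gen_seq A' B' k s.
Proof.
move=> sAA' sB'B /andP [uniq_s /forallP adm]; rewrite /gen_seq uniq_s.
apply/forallP => i; have /exists_inP [u uA lt_k] := adm i.
apply/exists_inP; exists u; first exact: subsetP (sAA' _) _ uA.
apply: leq_ltn_trans lt_k; apply: sub_count => w; exact: subsetP (sB'B w) u.
Qed.

Lemma onbhd_sub_cnbhd (T : finType) (e : rel T) v : onbhd e v \subset cnbhd e v.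
Proof. exact: subsetUr. Qed.

Lemma count_notin_leq_card (T : finType) (P : pred T) s u :
  uniq s -> P u -> count P s + (u \notin s) <= #|P|.
Proof.
have size_le t : uniq t -> all P t -> size t <= #|P|.
  by move=> uniq_t /allP tP; rewrite -(card_uniqP uniq_t); apply/subset_leq_card/subsetP.
move=> uniq_s Pu; rewrite -size_filter; have [_|uNs] := boolP (u \in s).
  by rewrite addn0 size_le ?filter_uniq ?filter_all.
rewrite addn1 -[_.+1]/(size (u :: filter P s)) size_le //= ?Pu ?filter_all //.
by rewrite mem_filter negb_and uNs orbT filter_uniq.
Qed.

Section CompleteBipartite.
Variables m n : nat.
Local Notation V := ('I_m + 'I_n)%type.
Local Notation K := (Kbip m n).
Implicit Types (p q s : seq V) (u v w : V).

Definition is_left w : bool := if w is inl _ then true else false.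
Definition part (b : bool) : pred V := fun w => is_left w == b.

Lemma in_onbhd_Kbip u w : (u \in onbhd K w) = part (~~ is_left u) w.
Proof. by rewrite inE; case: u => ?; case: w. Qed.

Lemma in_cnbhd_Kbip u w : (u \in cnbhd K w) = (u == w) || part (~~ is_left u) w.
Proof. by rewrite in_setU1 in_onbhd_Kbip. Qed.

Lemma count_onbhd_Kbip u s :
  count (fun w => u \in onbhd K w) s = count (part (~~ is_left u)) s.
Proof. by apply: eq_count => w; rewrite in_onbhd_Kbip. Qed.

Lemma count_cnbhd_Kbip u s :
  count (fun w => u \in cnbhd K w) s = count (part (~~ is_left u)) s + count_mem u s.
Proof.
elim: s => //= w s ->; rewrite in_cnbhd_Kbip [w == u]eq_sym.
have [->|_] := eqVneq u w; last by rewrite addnA.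
by rewrite /part; case: (is_left w); rewrite /= add0n addnCA.
Qed.

Lemma count_parts b s : count (part b) s + count (part (~~ b)) s = size s.
Proof.
rewrite -(count_predC (part b)); congr (_ + _); apply: eq_count => w.
by rewrite /= /part; case: b; case: is_left.
Qed.

Lemma card_part b : #|part b| = if b then m else n.
Proof.
have inj_inl : injective (@inl 'I_m 'I_n) by move=> ? ? [].
have inj_inr : injective (@inr 'I_m 'I_n) by move=> ? ? [].
case: b.
  rewrite -[RHS]card_ord -(card_codom inj_inl); apply: eq_card => -[x|y].
    by rewrite codom_f.
  by apply/esym/negbTE/codomP => -[].
rewrite -[RHS]card_ord -(card_codom inj_inr); apply: eq_card => -[x|y].
  by apply/esym/negbTE/codomP => -[].
by rewrite codom_f.
Qed.

Lemma card_part_le b : n <= m -> #|part b| <= m.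
Proof. by rewrite card_part; case: b. Qed.

Lemma grL_seq_size_le k s : n <= m -> gen_seq (cnbhd K) (onbhd K) k s -> size s <= m + k.
Proof.
move=> le_nm; case/lastP: s => [//|p v].
rewrite gen_seq_rcons => /and3P [/andP [uniq_p _] vNp /exists_inP [u _ adm_u]].
rewrite count_onbhd_Kbip in adm_u.
have uniq_s : uniq (rcons p v) by rewrite rcons_uniq vNp.
have same_part : count (part (is_left u)) (rcons p v) <= m.
  apply: leq_trans (card_part_le (is_left u) le_nm).
  apply: leq_trans (leq_addr (u \notin rcons p v) _) _.
  exact: count_notin_leq_card uniq_s (eqxx (is_left u) : part (is_left u) u).
have other_part : count (part (~~ is_left u)) (rcons p v) <= k.
  by apply: leq_trans adm_u; rewrite -cats1 count_cat /= addn0 -addn1 leq_add2l leq_b1.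
by rewrite -(count_parts (is_left u)) leq_add.
Qed.

Lemma gr_seq_size_le k s : n <= m -> gen_seq (cnbhd K) (cnbhd K) k s -> size s <= m + k - 1.
Proof.
move=> le_nm; case/lastP: s => [//|p v].
rewrite gen_seq_rcons => /and3P [/andP [uniq_p _] vNp /exists_inP [u _ adm]].
have adm_u : count (part (~~ is_left u)) p + (u \in p) < k.
  by rewrite -count_uniq_mem // -count_cnbhd_Kbip.
have uniq_s : uniq (rcons p v) by rewrite rcons_uniq vNp.
have same_part : count (part (is_left u)) (rcons p v) + (u \notin rcons p v) <= m.
  apply: leq_trans (card_part_le (is_left u) le_nm).
  exact: count_notin_leq_card uniq_s (eqxx (is_left u) : part (is_left u) u).
have other_part : count (part (~~ is_left u)) (rcons p v) =
    count (part (~~ is_left u)) p + part (~~ is_left u) v.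
  by rewrite -cats1 count_cat /= addn0.
(* v can lie opposite u only if v != u, and then u is in p or absent altogether *)
have v_other : part (~~ is_left u) v <= (u \notin rcons p v) + (u \in p).
  have [<-|neq_uv] := eqVneq u v.
    by rewrite /part; case: is_left.
  by rewrite mem_rcons in_cons (negbTE neq_uv); case: (u \in p); apply: leq_b1.
rewrite -(count_parts (is_left u)); lia.
Qed.

Lemma grt_seq_count_part_le k s b :
  gen_seq (onbhd K) (onbhd K) k s -> count (part b) s <= k.
Proof.
elim/last_ind: s => [//|p v IH].
rewrite gen_seq_rcons => /and3P [seq_p _ /exists_inP [u uNv adm_u]].
rewrite -cats1 count_cat /= addn0; have [/eqP <-|_] := boolP (part b v); last first.
  by rewrite addn0 IH.
rewrite in_onbhd_Kbip in uNv; rewrite count_onbhd_Kbip in adm_u.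
by rewrite (eqP uNv) addn1.
Qed.

Lemma grt_seq_size_le k s : gen_seq (onbhd K) (onbhd K) k s -> size s <= 2 * k.
Proof.
by move=> seq_s; rewrite -(count_parts true) mul2n -addnn leq_add ?grt_seq_count_part_le.
Qed.

Lemma count_part_all b s : all (part b) s -> count (part b) s = size s.
Proof. by rewrite all_count => /eqP. Qed.

Lemma count_part_all_opp b s : all (part b) s -> count (part (~~ b)) s = 0.
Proof.
move=> all_s; apply/eqP; rewrite -(eqn_add2l (size s)) addn0.
by rewrite -{1}(count_part_all all_s) count_parts.
Qed.

Lemma count_mem_all_opp b s u : all (part b) s -> ~~ part b u -> count_mem u s = 0.
Proof. by move=> /allP all_s uNb; apply/count_memPn; apply: contra uNb => /all_s. Qed.

Definition lefts a : seq V := map inl (take a (enum 'I_m)).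
Definition rights b : seq V := map inr (take b (enum 'I_n)).

Lemma mem_lefts a x : (inl x \in lefts a) = (x < a).
Proof. by rewrite mem_map ?in_take ?mem_enum ?index_enum_ord // => ? ? []. Qed.

Lemma uniq_lefts a : uniq (lefts a).
Proof. by rewrite map_inj_uniq ?take_uniq ?enum_uniq // => ? ? []. Qed.

Lemma uniq_blocks a b : uniq (lefts a ++ rights b).
Proof.
rewrite cat_uniq uniq_lefts map_inj_uniq => [|? ? [] //].
rewrite take_uniq ?enum_uniq // andbT /=.
by apply/hasPn => _ /mapP [y _ ->]; apply/mapP => -[].
Qed.

Lemma all_lefts a : all (part true) (lefts a).
Proof. by rewrite all_map; apply/allP. Qed.

Lemma all_rights b : all (part false) (rights b).
Proof. by rewrite all_map; apply/allP. Qed.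

Lemma size_lefts_le a : size (lefts a) <= a.
Proof. by rewrite size_map size_take; case: ltnP. Qed.

Lemma size_rights_le b : size (rights b) <= b.
Proof. by rewrite size_map size_take; case: ltnP. Qed.

Lemma size_blocks a b : a <= m -> b <= n -> size (lefts a ++ rights b) = a + b.
Proof. by move=> le_am le_bn; rewrite size_cat !size_map !size_takel ?size_enum_ord. Qed.

Lemma gen_seq_blocks (A B : V -> {set V}) k a b :
  (forall q x, all (part true) q -> inl x \notin q -> size q < a ->
     admissible A B k q (inl x)) ->
  (forall q y, all (part false) q -> size q < b ->
     admissible A B k (lefts a ++ q) (inr y)) ->
  gen_seq A B k (lefts a ++ rights b).
Proof.
move=> adm_left adm_right.
have prefix_facts c t q v : all (part c) t -> prefix (rcons q v) t ->
    [/\ part c v, all (part c) q & size q < size t].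
  move=> all_t pre; have /prefixP [r t_eq] := pre.
  move: all_t; rewrite t_eq all_cat all_rcons => /andP [/andP [-> ->] _].
  by split=> //; rewrite -(size_rcons q v) size_cat leq_addr.
apply: (gen_seq_catr _ (uniq_blocks a b)) => [|q v pre].
  rewrite -[lefts a]cat0s.
  apply: (gen_seq_catr (gen_seq_nil _ _ _) (uniq_lefts a)) => q v pre.
  have [v_left q_left lt_q] := prefix_facts _ _ _ _ (all_lefts a) pre.
  have := prefix_uniq pre (uniq_lefts a); rewrite rcons_uniq => /andP [vNq _].
  case: v v_left vNq {pre} => [x _ xNq|//]; apply: adm_left => //.
  exact: leq_trans lt_q (size_lefts_le a).
have [v_right q_right lt_q] := prefix_facts _ _ _ _ (all_rights b) pre.
case: v v_right {pre} => [//|y _]; apply: adm_right => //.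
exact: leq_trans lt_q (size_rights_le b).
Qed.

Lemma count_cnbhd_left_blocks x a q : all (part false) q ->
  count (fun w => inl x \in cnbhd K w) (lefts a ++ q) = size q + (x < a).
Proof.
move=> q_right; rewrite count_cnbhd_Kbip !count_cat count_part_all_opp ?all_lefts //.
rewrite count_part_all // count_uniq_mem ?uniq_lefts // mem_lefts.
by rewrite (count_mem_all_opp q_right) ?add0n ?addn0.
Qed.

Lemma gr_seq_blocks k : 0 < k -> k <= m ->
  gen_seq (cnbhd K) (cnbhd K) k (lefts m ++ rights k.-1).
Proof.
move=> k_gt0 k_le_m; pose x0 : 'I_m := Ordinal (leq_trans k_gt0 k_le_m).
apply: gen_seq_blocks => [q x q_left xNq _ | q y q_right lt_q]; apply/exists_inP.
  exists (inl x); first by rewrite in_cnbhd_Kbip eqxx.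
  by rewrite count_cnbhd_Kbip count_part_all_opp // (count_memPn xNq).
exists (inl x0); first by rewrite in_cnbhd_Kbip.
by rewrite count_cnbhd_left_blocks // ltn_ord addn1 -ltn_predRL.
Qed.

Lemma grL_seq_blocks k : 0 < k -> k <= m ->
  gen_seq (cnbhd K) (onbhd K) k (lefts m ++ rights k).
Proof.
move=> k_gt0 k_le_m; pose x0 : 'I_m := Ordinal (leq_trans k_gt0 k_le_m).
apply: gen_seq_blocks => [q x q_left _ _ | q y q_right lt_q]; apply/exists_inP.
  exists (inl x); first by rewrite in_cnbhd_Kbip eqxx.
  by rewrite count_onbhd_Kbip count_part_all_opp.
exists (inl x0); first by rewrite in_cnbhd_Kbip.
by rewrite count_onbhd_Kbip count_cat count_part_all_opp ?all_lefts // count_part_all.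
Qed.

Lemma grt_seq_blocks k : 0 < k -> k <= m -> k <= n ->
  gen_seq (onbhd K) (onbhd K) k (lefts k ++ rights k).
Proof.
move=> k_gt0 k_le_m k_le_n.
pose x0 : 'I_m := Ordinal (leq_trans k_gt0 k_le_m).
pose y0 : 'I_n := Ordinal (leq_trans k_gt0 k_le_n).
apply: gen_seq_blocks => [q x q_left _ lt_q | q y q_right lt_q]; apply/exists_inP.
  exists (inr y0); first by rewrite in_onbhd_Kbip.
  by rewrite count_onbhd_Kbip count_part_all.
exists (inl x0); first by rewrite in_onbhd_Kbip.
by rewrite count_onbhd_Kbip count_cat count_part_all_opp ?all_lefts // count_part_all.
Qed.

Lemma grZ_admissible_left k q x : 0 < n -> all (part true) q -> size q < k ->
  admissible (onbhd K) (cnbhd K) k q (inl x).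
Proof.
move=> n_gt0 q_left lt_q; apply/exists_inP; exists (inr (Ordinal n_gt0)).
  by rewrite in_onbhd_Kbip.
by rewrite count_cnbhd_Kbip count_part_all // (count_mem_all_opp q_left) ?addn0.
Qed.

Lemma grZ_seq_blocks k : 0 < k -> k < m -> k <= n ->
  gen_seq (onbhd K) (cnbhd K) k (lefts k ++ rights k).
Proof.
move=> k_gt0 k_lt_m k_le_n; pose x1 : 'I_m := Ordinal k_lt_m.
apply: gen_seq_blocks => [q x q_left _ lt_q | q y q_right lt_q].
  exact: grZ_admissible_left (leq_trans k_gt0 k_le_n) q_left lt_q.
apply/exists_inP; exists (inl x1); first by rewrite in_onbhd_Kbip.
by rewrite count_cnbhd_left_blocks // ltnn addn0.
Qed.

Lemma grZ_seq_short_blocks k : 0 < k -> k <= m -> k <= n ->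
  gen_seq (onbhd K) (cnbhd K) k (lefts k ++ rights k.-1).
Proof.
move=> k_gt0 k_le_m k_le_n; pose x0 : 'I_m := Ordinal (leq_trans k_gt0 k_le_m).
apply: gen_seq_blocks => [q x q_left _ lt_q | q y q_right lt_q].
  exact: grZ_admissible_left (leq_trans k_gt0 k_le_n) q_left lt_q.
apply/exists_inP; exists (inl x0); first by rewrite in_onbhd_Kbip.
by rewrite count_cnbhd_left_blocks //= k_gt0 addn1 -ltn_predRL.
Qed.

End CompleteBipartite.

Theorem mainTheorem7 (m n k : nat) :
  0 < k -> k <= m -> k <= n -> n <= m ->
  [/\ gamma_gr (Kbip m n) k = m + k - 1,
      gamma_grL (Kbip m n) k = m + k,
      gamma_grt (Kbip m n) k = 2 * k,
      (k < m -> gamma_grZ (Kbip m n) k = 2 * k)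
    & (m = k /\ n = k -> gamma_grZ (Kbip m n) k = 2 * k - 1)].
Proof.
move=> k_gt0 k_le_m k_le_n n_le_m.
have grZ_grt s : gen_seq (onbhd (Kbip m n)) (cnbhd (Kbip m n)) k s ->
    gen_seq (onbhd (Kbip m n)) (onbhd (Kbip m n)) k s.
  exact: gen_seq_sub (fun v => subxx _) (onbhd_sub_cnbhd _).
have grZ_gr s : gen_seq (onbhd (Kbip m n)) (cnbhd (Kbip m n)) k s ->
    gen_seq (cnbhd (Kbip m n)) (cnbhd (Kbip m n)) k s.
  exact: gen_seq_sub (onbhd_sub_cnbhd _) (fun v => subxx _).
have twice : k + k = 2 * k by rewrite addnn mul2n.
have km1_le_n : k.-1 <= n := leq_trans (leq_pred k) k_le_n.
rewrite /gamma_gr /gamma_grL /gamma_grt /gamma_grZ; split.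
- apply: gen_gamma_eq (gr_seq_blocks n k_gt0 k_le_m) _ (fun _ => gr_seq_size_le n_le_m).
  by rewrite size_blocks // -subn1 addnBA.
- apply: gen_gamma_eq (grL_seq_blocks n k_gt0 k_le_m) _ (fun _ => grL_seq_size_le n_le_m).
  exact: size_blocks.
- apply: gen_gamma_eq (grt_seq_blocks k_gt0 k_le_m k_le_n) _ _.
    by rewrite size_blocks.
  by move=> s /grt_seq_size_le.
- move=> k_lt_m; apply: gen_gamma_eq (grZ_seq_blocks k_gt0 k_lt_m k_le_n) _ _.
    by rewrite size_blocks // ltnW.
  by move=> s /grZ_grt /grt_seq_size_le.
- move=> [m_k n_k]; subst m n.
  apply: gen_gamma_eq (grZ_seq_short_blocks k_gt0 k_le_m k_le_n) _ _.
    by rewrite size_blocks // -subn1 addnBA // twice.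
  by rewrite -twice => s /grZ_gr; apply: gr_seq_size_le.
Qed.
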